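(* Let $h\ge1$ and $r\ge1$ be natural numbers and let $k_1,\dots,k_r$ be natural numbers with $1\le k_i\le h$. Then there exists a word $A\in\mathsf{W}^N_3$ such that $\mathbf{u}(A)=(K_{h,k_1},\dots,K_{h,k_r})$.
   Context: Words are finite strings over $\mathbb{N}$; $\Lambda$ is the empty word, juxtaposition is concatenation, $A^s$ is $A$ repeated $s$ times. For $k\in\mathbb{N}$, $\mathsf{S}_k$ is the set of words all of whose symbols are $\ge k$; $\mathsf{W}_3$ is the set of words with all symbols $\le3$. Given a linear preorder $\precsim$ with $A\sim B$ iff $A\precsim B\wedge B\precsim A$ and $A\prec B$ iff $A\precsim B\wedge\neg B\precsim A$, a finite sequence $(A_1,\dots,A_p)$ is lexicographically not greater than $(B_1,\dots,B_q)$ iff either $p\le q$ and $A_i\sim B_i$ for all $i\le p$, or there is $s<\min(p,q)$ with $A_i\sim B_i$ for $i\le s$ and $A_{s+1}\prec B_{s+1}$. A lexicographically maximal subsequence of a finite sequence is a subsequence that is lexicographically not less than every subsequence. The linear preorder $\precsim$ on words is defined by recursion on (largest symbol of $AB$) $-$ (smallest symbol of $AB$): $\Lambda\precsim\Lambda$; if $AB$ is nonempty with minimal symbol $n$, write uniquely $A=A_1n\cdots nA_k$, $B=B_1n\cdots nB_l$ ($k,l\ge1$) with $A_i,B_j\in\mathsf{S}_{n+1}$ (possibly empty); let $C,D$ be lexicographically maximal subsequences of $(A_1,\dots,A_k)$, $(B_1,\dots,B_l)$; then $A\precsim B$ iff $C$ is lexicographically not greater than $D$. The set $\mathsf{NF}$: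 $\Lambda\in\mathsf{NF}$; a word with minimal symbol $n$, written $A_1n\cdots nA_k$ with $k\ge2$, $A_i\in\mathsf{S}_{n+1}$, is in $\mathsf{NF}$ iff $A_k\precsim\dots\precsim A_1$ and all $A_i\in\mathsf{NF}$. Every word is equivalent to exactly one word of $\mathsf{NF}$. For $A\in\mathsf{NF}$, $\Diamond_nA$ is the unique word of $\mathsf{NF}$ equivalent to $An$. $\mathsf{W}^N_3=\mathsf{W}_3\cap\mathsf{NF}$. Let $I_s=3^s2$; for $1\le k\le h$ let $K_{h,k}=I_{h-1}I_{h-2}\cdots I_{k+1}I_k3^k$. For $A\in\mathsf{W}^N_3$ written as $A=A_r0A_{r-1}0\cdots0A_1$ with all $A_i\in\mathsf{S}_1\cap\mathsf{W}^N_3$, put $\mathbf{u}(A)=(u_1(A),\dots,u_r(A))$ where $u_i(A)=\Diamond_3(A_r0A_{r-1}0\cdots0A_i)$. *)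

From mathcomp Require Import all_boot.
Set Implicit Arguments. Unset Strict Implicit. Unset Printing Implicit Defensive.

(* smallest / largest symbol of a word (0 for the empty word, unused) *)
Definition minsym (s : seq nat) : nat := foldr minn (head 0 s) s.
Definition maxsym (s : seq nat) : nat := foldr maxn 0 s.

(* splitw n A = (A_1, ..., A_k) where A = A_1 n A_2 n ... n A_k, the A_i
   not containing n (possibly empty); k = (number of n's in A) + 1. *)
Fixpoint splitw (n : nat) (s : seq nat) : seq (seq nat) :=
  match s with
  | [::] => [:: [::]]
  | x :: s' => let r := splitw n s' in
      if x == n then [::] :: r else (x :: head [::] r) :: behead r
  end.

Fixpoint joinw (n : nat) (ps : seq (seq nat)) : seq nat :=
  match ps with
  | [::] => [::]
  | [:: x] => x
  | x :: ps' => x ++ n :: joinw n ps'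
  end.

Fixpoint subseqs {T : Type} (s : seq T) : seq (seq T) :=
  match s with
  | [::] => [:: [::]]
  | x :: s' => [seq x :: t | t <- subseqs s'] ++ subseqs s'
  end.

Fixpoint lexle {T : Type} (le : T -> T -> bool) (s t : seq T) : bool :=
  match s, t with
  | [::], _ => true
  | _ :: _, [::] => false
  | x :: s', y :: t' =>
      if le x y && le y x then lexle le s' t'
      else le x y && ~~ le y x
  end.

Definition lexmax {T : eqType} (le : T -> T -> bool) (s C : seq T) : bool :=
  (C \in subseqs s) && all (fun D => lexle le D C) (subseqs s).

(* The preorder on words, by recursion with fuel f; the fuel
   (maxsym (A++B) - minsym (A++B)).+1 used in [wle] is always sufficient,
   since the pieces compared at the next level have symbols in
   [n+1, maxsym (A++B)]. *)
Fixpoint wle_f (f : nat) (A B : seq nat) : bool :=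
  if A ++ B is [::] then true else
  match f with
  | 0 => true (* unreachable with sufficient fuel *)
  | f'.+1 =>
      let n := minsym (A ++ B) in
      let As := splitw n A in
      let Bs := splitw n B in
      has (fun C => has (fun D =>
             [&& lexmax (wle_f f') As C, lexmax (wle_f f') Bs D
               & lexle (wle_f f') C D]) (subseqs Bs)) (subseqs As)
  end.

Definition wle (A B : seq nat) : bool :=
  wle_f (maxsym (A ++ B) - minsym (A ++ B)).+1 A B.

Definition wequiv (A B : seq nat) : bool := wle A B && wle B A.

(* NF, by recursion with fuel (pieces are strictly shorter) *)
Fixpoint isNF_f (f : nat) (A : seq nat) : bool :=
  if A is [::] then true else
  match f with
  | 0 => false
  | f'.+1 =>
      let ps := splitw (minsym A) A in
      [&& 2 <= size ps, sorted (fun X Y => wle Y X) ps & all (isNF_f f') ps]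
  end.

Definition isNF (A : seq nat) : bool := isNF_f (size A).+1 A.

Definition inW3N (A : seq nat) : bool := all (fun x => x <= 3) A && isNF A.

(* D = ◇_n A, i.e. D is the (unique) NF word equivalent to A n
   (for A in NF) *)
Definition is_Diamond (n : nat) (A D : seq nat) : Prop :=
  isNF D /\ wequiv D (A ++ [:: n]).

(* I_s = 3^s 2 and K_{h,k} = I_{h-1} I_{h-2} ... I_k 3^k *)
Definition Iw (s : nat) : seq nat := nseq s 3 ++ [:: 2].
Definition Kw (h k : nat) : seq nat :=
  flatten [seq Iw s | s <- rev (iota k (h - k))] ++ nseq k 3.

(* u(A) = us : writing A = A_r 0 ... 0 A_1 (so splitw 0 A = (A_r,...,A_1)),
   us has length r and its i-th entry (0-based, i.e. u_{i+1}(A)) is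
   ◇_3 (A_r 0 ... 0 A_{i+1}). *)
Definition u_is (A : seq nat) (us : seq (seq nat)) : Prop :=
  let ps := splitw 0 A in
  size us = size ps /\
  forall i, i < size ps ->
    is_Diamond 3 (joinw 0 (take (size ps - i) ps)) (nth [::] us i).

(* The witness is A = W_(r-1) 0 ... 0 W_1 0 W_0.  Each W_j is a sequence of blocks
   separated by 1, and each block is 3^(s_1) 2 3^(s_2) 2 ... 2 3^(s_m) for a
   non-increasing (s_1, ..., s_m).  On words of this shape the preorder can be
   computed level by level: blocks compare as the lexicographic order of their
   exponent sequences, and words of blocks compare through lexicographically
   maximal subsequences of their blocks.
   W_j consists of j copies of the block L = (h-1, ..., 1, 0) followed by the block
   L_k = (h-1, ..., k, k-1) with k = k_(j+1); the W_j increase with j, so A is in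
   normal form.  Appending 3 to W_i turns its last block L_k into
   K_(h,k) = (h-1, ..., k, k), which beats L.  Hence K_(h,k) alone is the maximal
   subsequence of the blocks of W_i 3, which is therefore equivalent to K_(h,k),
   and W_i 3 alone is the maximal subsequence of the pieces of
   W_(r-1) 0 ... 0 W_i 3, which is therefore equivalent to K_(h,k) as well. *)

From mathcomp Require Import all_boot zify.
Set Implicit Arguments. Unset Strict Implicit. Unset Printing Implicit Defensive.

Lemma minsym_le s y : y \in s -> minsym s <= y.
Proof.
rewrite /minsym; move: (head 0 s) => a.
by elim: s => //= x s IH; rewrite inE => /orP[/eqP->|/IH]; lia.
Qed.

Lemma minsym_mem s : s != [::] -> minsym s \in s.
Proof.
have foldr_minn_mem a t : foldr minn a t \in a :: t.
  elim: t => [|y t IH] /=; first by rewrite mem_head.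
  rewrite /minn; case: ltnP => _; first by rewrite !inE eqxx orbT.
  by move: IH; rewrite !inE => /orP[->|->]; rewrite ?orbT.
case: s => // x s _; have := foldr_minn_mem x (x :: s).
by rewrite /minsym /= inE => /orP[/eqP->|]; rewrite ?mem_head.
Qed.

Lemma minsym_eq s n : n \in s -> {in s, forall y, n <= y} -> minsym s = n.
Proof.
move=> ns nle; apply/eqP; rewrite eqn_leq minsym_le // nle // minsym_mem //.
by case: (s) ns.
Qed.

Lemma maxsymE s : maxsym s = \max_(x <- s) x.
Proof. by rewrite unlock. Qed.

Lemma maxsym_ge s y : y \in s -> y <= maxsym s.
Proof. by rewrite maxsymE => ys; apply: leq_bigmax_seq. Qed.

Lemma splitw_neq0 n s : splitw n s != [::].
Proof. by case: s => //= x s; case: ifP. Qed.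

Lemma mem_splitw n A X x : X \in splitw n A -> x \in X -> (x \in A) && (x != n).
Proof.
elim: A X => [|a A IH] X /=; first by rewrite inE => /eqP->.
case: ifP => [an|/negbT an].
  by rewrite inE => /orP[/eqP->//|/IH H /H /andP[xA ->]]; rewrite inE xA orbT.
case: (splitw n A) IH (splitw_neq0 n A) => // Y r IH _.
rewrite inE => /orP[/eqP->|XY] /=.
  rewrite inE => /orP[/eqP->|xY]; first by rewrite mem_head.
  by have /andP[xA ->] := IH Y (mem_head _ _) xY; rewrite inE xA orbT.
by move=> xX; have /andP[xA ->] := IH X (mem_behead XY) xX; rewrite inE xA orbT.
Qed.

Lemma size_splitw n A X : X \in splitw n A -> size X + (n \in A) <= size A.
Proof.
elim: A X => [|a A IH] X /=; first by rewrite inE => /eqP->.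
rewrite [n \in _]inE; case: (eqVneq a n) => [_|an] /=.
  by rewrite inE => /orP[/eqP->//|/IH]; case: (n \in A) => /=; lia.
case: (splitw n A) IH (splitw_neq0 n A) => // Y r IH _.
rewrite inE => /orP[/eqP->|XY] /=.
  by have := IH Y (mem_head _ _); case: (n \in A) => /=; lia.
by have := IH X (mem_behead XY); case: (n \in A) => /=; lia.
Qed.

Lemma splitw_id n X : n \notin X -> splitw n X = [:: X].
Proof.
elim: X => //= x X IH; rewrite inE negb_or => /andP[xn /IH->].
by rewrite eq_sym (negbTE xn).
Qed.

Lemma splitw_joinw n (ps : seq (seq nat)) : ps != [::] -> all (fun X => n \notin X) ps ->
  splitw n (joinw n ps) = ps.
Proof.
elim: ps => // X [|Y ps] IH _ /= /andP[nX nps]; first by rewrite splitw_id.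
have splitw_cat Z t : n \notin Z -> splitw n (Z ++ n :: t) = Z :: splitw n t.
  elim: Z => /= [|z Z IHZ]; rewrite ?eqxx // inE negb_or => /andP[zn /IHZ->].
  by rewrite eq_sym (negbTE zn).
by rewrite splitw_cat // IH.
Qed.

Lemma rcons_neq0 (T : eqType) (s : seq T) x : rcons s x != [::].
Proof. by case: s. Qed.

Lemma joinw_cons n X ps : ps != [::] -> joinw n (X :: ps) = X ++ n :: joinw n ps.
Proof. by case: ps. Qed.

Lemma all_joinw (P : pred nat) n ps : P n -> all (all P) ps -> all P (joinw n ps).
Proof.
move=> Pn; elim: ps => //= X [|Y ps] IH /andP[PX Pps] //.
by rewrite all_cat PX /= Pn IH.
Qed.

Lemma mem_joinw n ps : 1 < size ps -> n \in joinw n ps.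
Proof. by case: ps => [|X [|Y ps]] //= _; rewrite mem_cat mem_head orbT. Qed.

Lemma joinw_rcons_cat n ps X Y :
  joinw n (rcons ps X) ++ Y = joinw n (rcons ps (X ++ Y)).
Proof. by elim: ps => //= Z [|Z' ps] IH; rewrite -catA //= IH. Qed.

Section Lexicographic.
Variable T : eqType.
Implicit Types (s t u : seq T) (le : rel T).

Lemma subseqs_self s : s \in subseqs s.
Proof. by elim: s => [|x s IH] /=; rewrite ?mem_head // mem_cat map_f. Qed.

Lemma mem_subseqs s t x : t \in subseqs s -> x \in t -> x \in s.
Proof.
elim: s t => [|y s IH] t /=; first by rewrite inE => /eqP->.
rewrite mem_cat inE => /orP[/mapP[t' t's ->]|/IH tx /tx->]; last by rewrite orbT.
by rewrite inE => /orP[->//|/(IH _ t's)->]; rewrite orbT.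
Qed.

Lemma subseqs_behead s x t : x :: t \in subseqs s -> t \in subseqs s.
Proof.
elim: s => [|y s IH] /=; first by rewrite inE.
by rewrite !mem_cat => /orP[/mapP[t' t's [_ ->]]|/IH->]; rewrite ?t's orbT.
Qed.

Lemma subseqs_map (T' : Type) (f : T' -> T) (s : seq T') :
  subseqs (map f s) = map (map f) (subseqs s).
Proof. by elim: s => //= x s ->; rewrite map_cat -!map_comp. Qed.

Lemma lexle_refl le s : {in s, reflexive le} -> lexle le s s.
Proof.
elim: s => //= x s IH lexx; rewrite lexx ?mem_head // IH // => y ys.
by rewrite lexx // inE ys orbT.
Qed.

Lemma lexle_catl le s t u : {in s, reflexive le} -> lexle le (s ++ t) (s ++ u) = lexle le t u.
Proof.
elim: s => //= x s IH lexx; rewrite lexx ?mem_head // IH // => y ys.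
by rewrite lexx // inE ys orbT.
Qed.

Lemma lexle1 le x y : lexle le [:: x] [:: y] = le x y.
Proof. by rewrite /=; case: (le x y); case: (le y x). Qed.

Lemma pairwise_nseq le m x : le x x -> pairwise le (nseq m x).
Proof. by move=> lexx; elim: m => //= m ->; rewrite all_nseq lexx orbT. Qed.

Lemma pairwise_rcons_nseq le i x y : le x x -> le x y -> pairwise le (rcons (nseq i x) y).
Proof. by move=> lexx lexy; rewrite pairwise_rcons pairwise_nseq // all_nseq lexy orbT. Qed.

Lemma lexle_nseq le m m' x : le x x -> lexle le (nseq m x) (nseq m' x) = (m <= m').
Proof. by move=> lexx; elim: m m' => [|m IH] [|m'] //=; rewrite lexx IH. Qed.

Lemma lexle_rcons_nseq le i x y y' : le x x -> le y x ->
  lexle le (rcons (nseq i x) y) (rcons (nseq i.+1 x) y').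
Proof. by move=> lexx leyx; elim: i => [|i IH] /=; rewrite ?lexx // leyx; case: (le x y). Qed.

Lemma lexle_map (T' : Type) (f : T' -> T) le (s t : seq T') :
  lexle le (map f s) (map f t) = lexle (relpre f le) s t.
Proof. by elim: s t => [|x s IH] [|y t] //=; rewrite IH. Qed.

Lemma eq_in_lexle (S : {pred T}) le le' : {in S &, le =2 le'} ->
  forall s t, {subset s <= S} -> {subset t <= S} -> lexle le s t = lexle le' s t.
Proof.
move=> eq_le; elim=> [|x s IH] [|y t] //= sS tS.
have xS := sS x (mem_head _ _); have yS := tS y (mem_head _ _).
rewrite !eq_le // IH // => z zs; [apply: sS|apply: tS]; by rewrite inE zs orbT.
Qed.

Lemma lexle_trans (S : {pred T}) le : {in S & &, transitive le} ->
  forall s t u, {subset s <= S} -> {subset t <= S} -> {subset u <= S} ->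
  lexle le s t -> lexle le t u -> lexle le s u.
Proof.
move=> le_tr; elim=> [|x s IH] [|y t] [|z u] //= sS tS uS.
have xS := sS x (mem_head _ _); have yS := tS y (mem_head _ _); have zS := uS z (mem_head _ _).
move=> st tu.
have lexy : le x y by move: st; case: (le x y).
have leyz : le y z by move: tu; case: (le y z).
rewrite (le_tr y x z) //=; case lezx: (le z x) => //.
have leyx : le y x := le_tr z y x zS yS xS leyz lezx.
have lezy : le z y := le_tr x z y xS zS yS lezx lexy.
move: st tu; rewrite lexy leyx leyz lezy /=.
by apply: IH => // w ws; [apply: sS|apply: tS|apply: uS]; rewrite inE ws orbT.
Qed.

Lemma lexmax1 le x C : lexmax le [:: x] C = (C == [:: x]) && le x x.
Proof.
rewrite /lexmax /= !inE; case: (eqVneq C [:: x]) => [->|_] /=; last by case: eqP => [->|].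
by rewrite andbT; case: (le x x).
Qed.

Lemma lexmax_sorted le s : {in s, reflexive le} -> pairwise (fun x y => le y x) s ->
  lexmax le s s.
Proof.
rewrite /lexmax subseqs_self /=; elim: s => [//|x s IH] lexx /=.
case/andP=> /allP x_max /(IH (fun y ys => lexx y (mem_behead (s := x :: s) ys))) /allP s_max.
apply/allP => D; rewrite mem_cat => /orP[/mapP[t ts ->]|].
  by rewrite /= lexx ?mem_head //= s_max.
case: D => // y t yts; have ys := mem_subseqs yts (mem_head _ _).
rewrite /= x_max //=; case: (le x y) => //=; exact/s_max/subseqs_behead/yts.
Qed.

Lemma lexmax_last le p x : le x x -> {in p, forall y, le y x && ~~ le x y} ->
  lexmax le (rcons p x) [:: x].
Proof.
move=> lexx x_top; rewrite /lexmax; apply/andP; split.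
  elim: p x_top => [|z p IH] x_top /=; first by rewrite mem_head.
  by rewrite mem_cat IH ?orbT // => y ys; apply: x_top; rewrite inE ys orbT.
apply/allP; elim: p x_top => [|z p IH] x_top /= D.
  by rewrite !inE => /orP[]/eqP->; rewrite //= lexx.
rewrite mem_cat => /orP[/mapP[t _ ->]|].
  by have /andP[lezx /negbTE lexz] := x_top z (mem_head _ _); rewrite /= lezx lexz.
by apply: IH => y ys; apply: x_top; rewrite inE ys orbT.
Qed.

Lemma eq_in_lexmax (S : {pred T}) le le' : {in S &, le =2 le'} ->
  forall s C, {subset s <= S} -> lexmax le s C = lexmax le' s C.
Proof.
move=> eq_le s C sS; rewrite /lexmax; case Cs: (C \in subseqs s) => //=.
apply: eq_in_all => D Ds; apply: (eq_in_lexle eq_le) => x xD.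
- exact/sS/(mem_subseqs Ds).
- exact/sS/(mem_subseqs Cs).
Qed.

Lemma lexmax_map (T' : eqType) (f : T' -> T) le (s C : seq T') :
  lexmax (relpre f le) s C -> lexmax le (map f s) (map f C).
Proof.
rewrite /lexmax subseqs_map => /andP[Cs /allP C_max]; rewrite map_f //=.
by apply/allP => _ /mapP[D Ds ->]; rewrite lexle_map C_max.
Qed.

(* One level of the recursion defining [wle_f]. *)
Definition lexmax_le le (ps qs : seq T) : bool :=
  has (fun C => has (fun D => [&& lexmax le ps C, lexmax le qs D & lexle le C D])
    (subseqs qs)) (subseqs ps).

Lemma eq_in_lexmax_le (S : {pred T}) le le' : {in S &, le =2 le'} ->
  forall ps qs, {subset ps <= S} -> {subset qs <= S} ->
  lexmax_le le ps qs = lexmax_le le' ps qs.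
Proof.
move=> eq_le ps qs psS qsS; apply: eq_in_has => C Cs; apply: eq_in_has => D Ds.
rewrite !(eq_in_lexmax eq_le) // (eq_in_lexle eq_le) // => x.
  by move/(mem_subseqs Cs)/psS.
by move/(mem_subseqs Ds)/qsS.
Qed.

Lemma lexmax_leP le ps qs C D : lexmax le ps C -> lexmax le qs D -> lexle le C D ->
  lexmax_le le ps qs.
Proof.
move=> Cmax Dmax CD; apply/hasP; exists C; first by case/andP: Cmax.
by apply/hasP; exists D; [case/andP: Dmax|rewrite Cmax Dmax].
Qed.

Lemma lexmax_leE le ps qs C D : {in ps ++ qs & &, transitive le} ->
  lexmax le ps C -> lexmax le qs D -> lexmax_le le ps qs = lexle le C D.
Proof.
move=> le_tr Cmax Dmax; apply/idP/idP; last exact: lexmax_leP.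
case/hasP=> C' C's /hasP[D' D'qs /and3P[C'max D'max C'D']].
have in_ps E : E \in subseqs ps -> {subset E <= ps ++ qs}.
  by move=> Eps x /(mem_subseqs Eps); rewrite mem_cat => ->.
have in_qs E : E \in subseqs qs -> {subset E <= ps ++ qs}.
  by move=> Eqs x /(mem_subseqs Eqs); rewrite mem_cat => ->; rewrite orbT.
have /andP[Cs C_max] := Cmax; have /andP[Ds D_max] := Dmax.
have CC' : lexle le C C' by case/andP: C'max => _ /allP; apply.
have D'D : lexle le D' D by move/allP: D_max; apply.
apply: (lexle_trans le_tr (in_ps _ Cs) (in_qs _ D'qs) (in_qs _ Ds) _ D'D).
exact: (lexle_trans le_tr (in_ps _ Cs) (in_ps _ C's) (in_qs _ D'qs) CC' C'D').
Qed.

End Lexicographic.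

Lemma wle_f_nil f A B : A ++ B = [::] -> wle_f f A B.
Proof. by case: f => [|f] /= ->. Qed.

Lemma wle_f_unfold f A B : A ++ B != [::] ->
  wle_f f.+1 A B =
  lexmax_le (wle_f f) (splitw (minsym (A ++ B)) A) (splitw (minsym (A ++ B)) B).
Proof. by case AB: (A ++ B) => [//|x s] _; rewrite /= AB. Qed.

Lemma mem_pieces n A B X x : X \in splitw n A ++ splitw n B -> x \in X ->
  (x \in A ++ B) && (x != n).
Proof.
rewrite !mem_cat => /orP[] XAB /(mem_splitw XAB) /andP[-> ->]; by rewrite ?orbT.
Qed.

(* Why the fuel chosen in [wle] suffices. *)
Lemma span_pieces A B X Y (n := minsym (A ++ B)) :
  X \in splitw n A ++ splitw n B -> Y \in splitw n A ++ splitw n B -> X ++ Y != [::] ->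
  maxsym (X ++ Y) - minsym (X ++ Y) < maxsym (A ++ B) - minsym (A ++ B).
Proof.
move=> XAB YAB XY0.
have XY_AB z : z \in X ++ Y -> (z \in A ++ B) && (z != n).
  by rewrite mem_cat => /orP[]; [apply: mem_pieces XAB|apply: mem_pieces YAB].
have /XY_AB/andP[minAB min_n] := minsym_mem XY0.
have := minsym_le minAB; have := maxsym_ge (minsym_mem XY0).
have : maxsym (X ++ Y) <= maxsym (A ++ B).
  by rewrite [leqLHS]maxsymE; apply/bigmax_leqP_seq => z /XY_AB/andP[/maxsym_ge].
by rewrite -/n; move: min_n; lia.
Qed.

Lemma wle_f_fuel f g A B : maxsym (A ++ B) - minsym (A ++ B) < minn f g ->
  wle_f f A B = wle_f g A B.
Proof.
elim: f g A B => [|f IH] [|g] A B; rewrite ?minnSS ?minn0 ?min0n // ltnS => fuel.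
have [AB0|AB0] := eqVneq (A ++ B) [::]; first by rewrite !wle_f_nil.
rewrite !wle_f_unfold //; set n := minsym (A ++ B).
apply: (@eq_in_lexmax_le _ [in splitw n A ++ splitw n B]) => [X Y XAB YAB||].
  have [XY0|XY0] := eqVneq (X ++ Y) [::]; first by rewrite !wle_f_nil.
  by apply: IH; apply: leq_trans (span_pieces XAB YAB XY0) fuel.
all: by move=> X XA; rewrite mem_cat XA ?orbT.
Qed.

Lemma wle_unfold A B (n := minsym (A ++ B)) : A ++ B != [::] ->
  wle A B = lexmax_le wle (splitw n A) (splitw n B).
Proof.
move=> AB0; rewrite {1}/wle wle_f_unfold //.
apply: (@eq_in_lexmax_le _ [in splitw n A ++ splitw n B]) => [X Y XAB YAB||].
  have [XY0|XY0] := eqVneq (X ++ Y) [::]; first by rewrite /wle !wle_f_nil.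
  by apply: wle_f_fuel; rewrite leq_min ltnSn andbT span_pieces.
all: by move=> X XA; rewrite mem_cat XA ?orbT.
Qed.

Lemma isNF_f_unfold f A (n := minsym A) : A != [::] ->
  isNF_f f.+1 A = [&& 1 < size (splitw n A), sorted (fun X Y => wle Y X) (splitw n A)
                    & all (isNF_f f) (splitw n A)].
Proof. by case: A @n. Qed.

Lemma isNF_f_fuel f g A : size A < minn f g -> isNF_f f A = isNF_f g A.
Proof.
elim: f g A => [|f IH] [|g] [|a A] //; rewrite minnSS ltnS => fuel.
rewrite !isNF_f_unfold //; congr [&& _, _ & _]; apply: eq_in_all => X /size_splitw.
by rewrite minsym_mem //= => ?; apply: IH; move: fuel => /=; lia.
Qed.

Lemma isNF_unfold A (n := minsym A) : A != [::] ->
  isNF A = [&& 1 < size (splitw n A), sorted (fun X Y => wle Y X) (splitw n A)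
             & all isNF (splitw n A)].
Proof.
move=> A0; rewrite {1}/isNF isNF_f_unfold //; congr [&& _, _ & _].
apply: eq_in_all => X /size_splitw; rewrite minsym_mem //= => ?.
by apply: isNF_f_fuel; rewrite leq_min ltnSn andbT; lia.
Qed.

Lemma pieces_notin n (ps : seq (seq nat)) :
  all (all (leq n.+1)) ps -> all (fun X => n \notin X) ps.
Proof. by apply: sub_all => X /allP X_above; apply/negP => /X_above; rewrite ltnn. Qed.

Lemma all_geq_joinw n ps : all (all (leq n.+1)) ps -> all (leq n) (joinw n ps).
Proof.
move=> above; apply: all_joinw => //.
by apply: sub_all above => X; apply: sub_all => x /ltnW.
Qed.

Lemma joinw_single n ps : ps != [::] -> all (all (leq n.+1)) ps -> n \notin joinw n ps ->
  ps = [:: joinw n ps].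
Proof.
by move=> ps0 ps_above n_ps; rewrite -[LHS](@splitw_joinw n) ?splitw_id ?pieces_notin.
Qed.

Section JoinComparison.
Variables (n : nat) (ps qs : seq (seq nat)).
Hypotheses (ps0 : ps != [::]) (qs0 : qs != [::]).
Hypotheses (ps_above : all (all (leq n.+1)) ps) (qs_above : all (all (leq n.+1)) qs).

Let wle_joinw_lexmax_le : n \in joinw n ps ++ joinw n qs ->
  wle (joinw n ps) (joinw n qs) = lexmax_le wle ps qs.
Proof.
move=> n_pq; have pq0 : joinw n ps ++ joinw n qs != [::] by case: (_ ++ _) n_pq.
rewrite wle_unfold // (minsym_eq n_pq) ?splitw_joinw ?pieces_notin //.
by apply/allP; rewrite all_cat !all_geq_joinw.
Qed.

Let single_pieces : n \notin joinw n ps ++ joinw n qs ->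
  ps = [:: joinw n ps] /\ qs = [:: joinw n qs].
Proof. by rewrite mem_cat negb_or => /andP[n_ps n_qs]; split; apply: joinw_single. Qed.

Lemma wle_joinw_lexmax C D : lexmax wle ps C -> lexmax wle qs D -> lexle wle C D ->
  wle (joinw n ps) (joinw n qs).
Proof.
move=> Cmax Dmax CD.
have [n_pq|/single_pieces[ps1 qs1]] := boolP (n \in joinw n ps ++ joinw n qs).
  by rewrite wle_joinw_lexmax_le //; apply: lexmax_leP Cmax Dmax CD.
move: Cmax Dmax CD; rewrite ps1 qs1 !lexmax1 => /andP[/eqP-> _] /andP[/eqP-> _].
by rewrite lexle1.
Qed.

Lemma wle_joinwE C D : {in ps ++ qs & &, transitive wle} ->
  lexmax wle ps C -> lexmax wle qs D -> wle (joinw n ps) (joinw n qs) = lexle wle C D.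
Proof.
move=> wle_tr Cmax Dmax.
have [n_pq|/single_pieces[ps1 qs1]] := boolP (n \in joinw n ps ++ joinw n qs).
  by rewrite wle_joinw_lexmax_le // (lexmax_leE wle_tr Cmax Dmax).
move: Cmax Dmax; rewrite ps1 qs1 !lexmax1 => /andP[/eqP-> _] /andP[/eqP-> _].
by rewrite lexle1.
Qed.

End JoinComparison.

Lemma isNF_joinw n ps : ps != [::] -> all (all (leq n.+1)) ps ->
  sorted (fun X Y => wle Y X) ps -> all isNF ps -> isNF (joinw n ps).
Proof.
case: ps => [//|X [|Y ps]] _ above sorted_ps NF_ps; first by case/andP: NF_ps.
have n_in : n \in joinw n [:: X, Y & ps] by apply: mem_joinw.
rewrite isNF_unfold; last by case: (joinw _ _) n_in.
rewrite (minsym_eq n_in); last exact/allP/all_geq_joinw.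
by rewrite splitw_joinw ?pieces_notin // sorted_ps NF_ps.
Qed.

Lemma sorted_map_iota (T : Type) (r : rel T) (f : nat -> T) m n :
  (forall j, r (f j) (f j.+1)) -> sorted r (map f (iota m n)).
Proof. by move=> r_succ; case: n => //= n; elim: n m => //= n IH m; rewrite r_succ IH. Qed.

Lemma lexle_leq_refl s : lexle leq s s.
Proof. exact: lexle_refl. Qed.

Lemma lexle_leq_trans : transitive (lexle leq).
Proof. by move=> t s u; apply: (@lexle_trans _ predT) => // y x z _ _ _; apply: leq_trans. Qed.

Definition pow3 a : seq nat := nseq a 3.

Lemma pow3E a : pow3 a = joinw 3 (nseq a.+1 [::]).
Proof. by elim: a => //= a ->; case: a. Qed.

Lemma mem_nseq_nil k (X : seq nat) : X \in nseq k [::] -> X = [::].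
Proof. by rewrite mem_nseq => /andP[_ /eqP]. Qed.

Lemma lexmax_nseq_nil k : lexmax wle (nseq k [::]) (nseq k [::]).
Proof. by apply: lexmax_sorted => [X /mem_nseq_nil->|]; last exact: pairwise_nseq. Qed.

Lemma wle_pow3 a b : wle (pow3 a) (pow3 b) = (a <= b).
Proof.
rewrite !pow3E (wle_joinwE _ _ _ _ _ (lexmax_nseq_nil _) (lexmax_nseq_nil _)).
  by rewrite lexle_nseq.
all: rewrite ?all_nseq //.
by move=> y x z; rewrite -nseqD => /mem_nseq_nil-> /mem_nseq_nil-> /mem_nseq_nil->.
Qed.

Lemma isNF_pow3 a : isNF (pow3 a).
Proof.
rewrite pow3E; apply: isNF_joinw => //; rewrite ?all_nseq ?orbT //.
exact/pairwise_sorted/pairwise_nseq.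
Qed.

Definition noninc (s : seq nat) : bool := (s != [::]) && sorted geq s.

Definition word2 (s : seq nat) : seq nat := joinw 2 (map pow3 s).

Lemma all_word2 (P : pred nat) s : P 2 -> P 3 -> all P (word2 s).
Proof.
move=> P2 P3; apply: all_joinw => //; rewrite all_map.
by apply/allP => a _ /=; rewrite all_nseq P3 orbT.
Qed.

Lemma pow3_above s : all (all (leq 3)) (map pow3 s).
Proof. by rewrite all_map; apply/allP => a _ /=; rewrite all_nseq orbT. Qed.

Lemma sorted_pow3 s : sorted (fun X Y => wle Y X) (map pow3 s) = sorted geq s.
Proof.
rewrite sorted_map; apply: (@eq_in_sorted _ predT); last exact: all_predT.
by move=> a b _ _ /=; rewrite wle_pow3.
Qed.

Lemma lexmax_pow3 s : noninc s -> lexmax wle (map pow3 s) (map pow3 s).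
Proof.
case/andP=> _ s_sorted; apply: lexmax_sorted => [_ /mapP[a _ ->]|]; first by rewrite wle_pow3.
rewrite pairwise_map; apply: sub_pairwise (_ : pairwise geq s) => [a b /=|].
  by rewrite wle_pow3.
by rewrite -sorted_pairwise //; apply: rev_trans leq_trans.
Qed.

Lemma wle_word2 s t : noninc s -> noninc t -> wle (word2 s) (word2 t) = lexle leq s t.
Proof.
move=> s_ni t_ni; rewrite /word2 (wle_joinwE _ _ _ _ _ (lexmax_pow3 s_ni) (lexmax_pow3 t_ni))
  ?pow3_above //.
- by rewrite lexle_map; apply: (@eq_in_lexle _ predT) => // a b _ _ /=; rewrite wle_pow3.
- by case: s s_ni.
- by case: t t_ni.
- rewrite -map_cat => _ _ _ /mapP[b _ ->] /mapP[a _ ->] /mapP[c _ ->].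
  by rewrite !wle_pow3; apply: leq_trans.
Qed.

Lemma isNF_word2 s : noninc s -> isNF (word2 s).
Proof.
case/andP=> s0 s_sorted; apply: isNF_joinw; rewrite ?pow3_above ?sorted_pow3 //.
- by case: s s0 {s_sorted}.
- by apply/allP => _ /mapP[a _ ->]; apply: isNF_pow3.
Qed.

Definition word1 (ws : seq (seq nat)) : seq nat := joinw 1 (map word2 ws).

Lemma all_word1 (P : pred nat) ws : P 1 -> P 2 -> P 3 -> all P (word1 ws).
Proof.
move=> P1 P2 P3; apply: all_joinw => //; rewrite all_map.
by apply/allP => s _; apply: all_word2.
Qed.

Lemma word2_above ws : all (all (leq 2)) (map word2 ws).
Proof. by rewrite all_map; apply/allP => s _; apply: all_word2. Qed.

Lemma lexmax_word2 ws C : all noninc ws -> lexmax (lexle leq) ws C ->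
  lexmax wle (map word2 ws) (map word2 C).
Proof.
move=> ws_ni Cmax; apply: lexmax_map; rewrite (@eq_in_lexmax _ noninc _ (lexle leq)) //.
- by move=> s t s_ni t_ni /=; rewrite wle_word2.
- exact/allP.
Qed.

Lemma wle_word1 ws vs C D : ws != [::] -> vs != [::] -> all noninc (ws ++ vs) ->
  lexmax (lexle leq) ws C -> lexmax (lexle leq) vs D ->
  wle (word1 ws) (word1 vs) = lexle (lexle leq) C D.
Proof.
move=> ws0 vs0; rewrite all_cat => /andP[ws_ni vs_ni] Cmax Dmax.
rewrite /word1 (wle_joinwE _ _ _ _ _ (lexmax_word2 ws_ni Cmax) (lexmax_word2 vs_ni Dmax))
  ?word2_above //.
- rewrite lexle_map; apply: (@eq_in_lexle _ noninc) => [s t s_ni t_ni /=|s Cs|t Dt].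
  + by rewrite wle_word2.
  + by case/andP: Cmax => C_ws _; apply/(allP ws_ni)/(mem_subseqs C_ws).
  + by case/andP: Dmax => D_vs _; apply/(allP vs_ni)/(mem_subseqs D_vs).
- by case: ws ws0 {Cmax ws_ni}.
- by case: vs vs0 {Dmax vs_ni}.
- rewrite -map_cat => _ _ _ /mapP[t t_in ->] /mapP[s s_in ->] /mapP[u u_in ->].
  have /allP ni : all noninc (ws ++ vs) by rewrite all_cat ws_ni.
  by rewrite !wle_word2 ?ni //; apply: lexle_leq_trans.
Qed.

Lemma isNF_word1 ws : ws != [::] -> all noninc ws -> sorted (fun s t => lexle leq t s) ws ->
  isNF (word1 ws).
Proof.
move=> ws0 ws_ni ws_sorted; apply: isNF_joinw; rewrite ?word2_above //.
- by case: ws ws0 {ws_ni ws_sorted}.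
- rewrite sorted_map (@eq_in_sorted _ noninc _ (fun s t => lexle leq t s)) //.
  by move=> s t s_ni t_ni /=; rewrite wle_word2.
- by apply/allP => _ /mapP[s s_in ->]; apply/isNF_word2/(allP ws_ni).
Qed.

Section Witness.
Variable h : nat.
Hypothesis h_gt0 : 0 < h.

Definition Kseq k := rcons (rev (iota k (h - k))) k.
Definition Lseq k := rcons (rev (iota k (h - k))) k.-1.
Definition Lfull := rev (iota 0 h).

Lemma noninc_rcons_rev_iota k x : x <= k -> noninc (rcons (rev (iota k (h - k))) x).
Proof.
move=> xk; rewrite /noninc -rev_cons -size_eq0 size_rev rev_sorted /=.
by case: (h - k) => //= m; rewrite xk; apply: (iota_sorted k m.+1).
Qed.

Lemma noninc_Kseq k : noninc (Kseq k).
Proof. exact: noninc_rcons_rev_iota. Qed.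

Lemma noninc_Lseq k : noninc (Lseq k).
Proof. exact/noninc_rcons_rev_iota/leq_pred. Qed.

Lemma noninc_Lfull : noninc Lfull.
Proof.
rewrite /noninc /Lfull -size_eq0 size_rev size_iota -lt0n h_gt0 rev_sorted.
exact: iota_sorted.
Qed.

Lemma Lfull_split k : 1 <= k <= h -> Lfull = rev (iota k (h - k)) ++ k.-1 :: rev (iota 0 k.-1).
Proof.
case/andP=> k_gt0 k_le_h; rewrite /Lfull -{1}(subnKC k_le_h) iotaD rev_cat add0n.
congr (_ ++ _); case: k k_gt0 {k_le_h} => // k _.
by rewrite -addn1 iotaD rev_cat add0n addn1.
Qed.

Lemma lexle_Lseq_Lfull k : 1 <= k <= h -> lexle leq (Lseq k) Lfull.
Proof. by move=> hk; rewrite (Lfull_split hk) /Lseq -cats1 lexle_catl //= leqnn. Qed.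

Lemma lexlt_Lfull_Kseq k : 1 <= k <= h ->
  lexle leq Lfull (Kseq k) && ~~ lexle leq (Kseq k) Lfull.
Proof.
move=> hk; rewrite (Lfull_split hk) /Kseq -cats1 !lexle_catl //=.
by case/andP: hk => k_gt0 _; rewrite leq_pred; case: k k_gt0 => //= k _; rewrite ltnn.
Qed.

Definition Wseq i k := rcons (nseq i Lfull) (Lseq k).
Definition W3seq i k := rcons (nseq i Lfull) (Kseq k).

Lemma noninc_Wseq i k : all noninc (Wseq i k).
Proof. by rewrite all_rcons noninc_Lseq all_nseq noninc_Lfull orbT. Qed.

Lemma noninc_W3seq i k : all noninc (W3seq i k).
Proof. by rewrite all_rcons noninc_Kseq all_nseq noninc_Lfull orbT. Qed.

Lemma pairwise_Wseq i k : 1 <= k <= h -> pairwise (fun s t => lexle leq t s) (Wseq i k).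
Proof.
by move=> hk; apply: pairwise_rcons_nseq; [apply: lexle_leq_refl|apply: lexle_Lseq_Lfull].
Qed.

Lemma lexmax_Wseq i k : 1 <= k <= h -> lexmax (lexle leq) (Wseq i k) (Wseq i k).
Proof.
by move=> hk; apply: lexmax_sorted (pairwise_Wseq i hk) => s _; apply: lexle_leq_refl.
Qed.

Lemma lexmax_W3seq i k : 1 <= k <= h -> lexmax (lexle leq) (W3seq i k) [:: Kseq k].
Proof.
move=> hk; apply: lexmax_last => [|s]; first exact: lexle_leq_refl.
by rewrite mem_nseq => /andP[_ /eqP->]; apply: lexlt_Lfull_Kseq.
Qed.

Lemma lexmax_Kseq k : lexmax (lexle leq) [:: Kseq k] [:: Kseq k].
Proof. by rewrite lexmax1 eqxx lexle_leq_refl. Qed.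

Lemma wle_Wseq_succ i k k' : 1 <= k <= h -> 1 <= k' <= h ->
  wle (word1 (Wseq i k)) (word1 (Wseq i.+1 k')).
Proof.
move=> hk hk'; rewrite (wle_word1 _ _ _ (lexmax_Wseq i hk) (lexmax_Wseq i.+1 hk'))
  ?rcons_neq0 ?all_cat ?noninc_Wseq //.
by apply: lexle_rcons_nseq; [apply: lexle_leq_refl|apply: lexle_Lseq_Lfull].
Qed.

Lemma wle_word1_lexmax ws vs C : ws != [::] -> vs != [::] -> all noninc (ws ++ vs) ->
  lexmax (lexle leq) ws C -> lexmax (lexle leq) vs C -> wle (word1 ws) (word1 vs).
Proof.
move=> ws0 vs0 ni Cws Cvs; rewrite (wle_word1 ws0 vs0 ni Cws Cvs).
by apply: lexle_refl => s _; apply: lexle_leq_refl.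
Qed.

Lemma wlt_Wseq_W3seq i j k k' : 1 <= k <= h -> 1 <= k' <= h ->
  wle (word1 (Wseq j.+1 k')) (word1 (W3seq i k)) &&
  ~~ wle (word1 (W3seq i k)) (word1 (Wseq j.+1 k')).
Proof.
move=> hk hk'.
have ni : all noninc (Wseq j.+1 k' ++ W3seq i k) by rewrite all_cat noninc_Wseq noninc_W3seq.
rewrite (wle_word1 _ _ ni (lexmax_Wseq j.+1 hk') (lexmax_W3seq i hk)) ?rcons_neq0 //.
rewrite (wle_word1 _ _ _ (lexmax_W3seq i hk) (lexmax_Wseq j.+1 hk')) ?rcons_neq0 //; last first.
  by rewrite all_cat noninc_Wseq noninc_W3seq.
have /andP[lt1 /negbTE lt2] := lexlt_Lfull_Kseq hk.
by rewrite /Wseq [nseq _ _]/= rcons_cons /= lt1 lt2.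
Qed.

Lemma isNF_Wseq i k : 1 <= k <= h -> isNF (word1 (Wseq i k)).
Proof.
move=> hk; apply: isNF_word1; rewrite ?rcons_neq0 ?noninc_Wseq //.
exact/pairwise_sorted/pairwise_Wseq.
Qed.

Lemma word2_rcons_pow3 s a : word2 (rcons s a) ++ [:: 3] = word2 (rcons s a.+1).
Proof.
rewrite /word2 !map_rcons joinw_rcons_cat; congr (joinw 2 (rcons _ _)).
by elim: a => //= a ->.
Qed.

Lemma word1_Wseq_cat3 i k : 0 < k -> word1 (Wseq i k) ++ [:: 3] = word1 (W3seq i k).
Proof.
by move=> k_gt0; rewrite /word1 !map_rcons joinw_rcons_cat word2_rcons_pow3 prednK.
Qed.

Lemma Kw_Kseq k : Kw h k = word1 [:: Kseq k].
Proof.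
rewrite /Kw /word1 /= /word2 /Kseq map_rcons; elim: (rev _) => // a s IH.
by rewrite map_cons rcons_cons joinw_cons ?rcons_neq0 // -IH /= /Iw -!catA.
Qed.

Lemma wle_W3seq_Kseq i k ws vs : 1 <= k <= h ->
  ws \in [:: W3seq i k; [:: Kseq k]] -> vs \in [:: W3seq i k; [:: Kseq k]] ->
  wle (word1 ws) (word1 vs).
Proof.
move=> hk; have facts rs : rs \in [:: W3seq i k; [:: Kseq k]] ->
    [&& rs != [::], all noninc rs & lexmax (lexle leq) rs [:: Kseq k]].
  rewrite !inE => /orP[]/eqP->; rewrite ?rcons_neq0 ?noninc_W3seq ?lexmax_W3seq //=.
  by rewrite noninc_Kseq lexmax_Kseq.
move=> /facts/and3P[ws0 ws_ni ws_max] /facts/and3P[vs0 vs_ni vs_max].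
by apply: wle_word1_lexmax ws_max vs_max; rewrite ?all_cat ?ws_ni.
Qed.

Lemma Diamond_Kseq R i k : 1 <= k <= h ->
  {in R, forall Y, exists j k', Y = word1 (Wseq j.+1 k') /\ 1 <= k' <= h} ->
  is_Diamond 3 (joinw 0 (rcons R (word1 (Wseq i k)))) (word1 [:: Kseq k]).
Proof.
move=> hk R_below; split; first exact/isNF_word2/noninc_Kseq.
have K_in : [:: Kseq k] \in [:: W3seq i k; [:: Kseq k]] by rewrite !inE eqxx orbT.
have W_in : W3seq i k \in [:: W3seq i k; [:: Kseq k]] by rewrite mem_head.
have K_max : lexmax wle [:: word1 [:: Kseq k]] [:: word1 [:: Kseq k]].
  by rewrite lexmax1 eqxx (wle_W3seq_Kseq hk K_in K_in).
have W_max : lexmax wle (rcons R (word1 (W3seq i k))) [:: word1 (W3seq i k)].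
  apply: lexmax_last; first exact: (wle_W3seq_Kseq hk W_in W_in).
  by move=> _ /R_below[j [k' [-> hk']]]; apply: wlt_Wseq_W3seq.
have K_above : all (all (leq 1)) [:: word1 [:: Kseq k]] by rewrite /= all_word1.
have W_above : all (all (leq 1)) (rcons R (word1 (W3seq i k))).
  apply/allP => Y; rewrite mem_rcons inE.
  by case/orP=> [/eqP->|/R_below[j [k' [-> _]]]]; apply: all_word1.
rewrite /wequiv joinw_rcons_cat word1_Wseq_cat3; last by case/andP: hk.
rewrite -[word1 [:: Kseq k]]/(joinw 0 [:: word1 [:: Kseq k]]); apply/andP; split.
- apply: (wle_joinw_lexmax _ _ K_above W_above K_max W_max); rewrite ?rcons_neq0 ?lexle1 //.
  exact: (wle_W3seq_Kseq hk K_in W_in).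
- apply: (wle_joinw_lexmax _ _ W_above K_above W_max K_max); rewrite ?rcons_neq0 ?lexle1 //.
  exact: (wle_W3seq_Kseq hk W_in K_in).
Qed.

Variable kf : nat -> nat.
Hypothesis kf_range : forall j, 1 <= kf j <= h.

Definition piece j := word1 (Wseq j (kf j)).
Definition witness r := joinw 0 (rev [seq piece j | j <- iota 0 r]).

Lemma pieces_above r : all (all (leq 1)) (rev [seq piece j | j <- iota 0 r]).
Proof. by rewrite all_rev all_map; apply/allP => j _; apply: all_word1. Qed.

Lemma splitw_witness r : 0 < r -> splitw 0 (witness r) = rev [seq piece j | j <- iota 0 r].
Proof.
move=> r_gt0; rewrite splitw_joinw ?pieces_notin ?pieces_above //.
by rewrite -size_eq0 size_rev size_map size_iota -lt0n.
Qed.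

Lemma inW3N_witness r : 0 < r -> inW3N (witness r).
Proof.
move=> r_gt0; apply/andP; split.
  by apply: all_joinw => //; rewrite all_rev all_map; apply/allP => j _; apply: all_word1.
apply: isNF_joinw; rewrite ?pieces_above //.
- by rewrite -size_eq0 size_rev size_map size_iota -lt0n.
- by rewrite rev_sorted; apply: sorted_map_iota => j; apply: wle_Wseq_succ.
- by rewrite all_rev all_map; apply/allP => j _; apply: isNF_Wseq.
Qed.

Lemma u_is_witness r : 0 < r -> u_is (witness r) [seq word1 [:: Kseq (kf j)] | j <- iota 0 r].
Proof.
move=> r_gt0; rewrite /u_is splitw_witness // size_rev !size_map size_iota; split=> // i ltir.
rewrite (nth_map 0) ?size_iota // nth_iota // add0n.
rewrite take_rev size_map size_iota -map_drop drop_iota add0n (subKn (ltnW ltir)).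
rewrite -(prednK (_ : 0 < r - i)) ?subn_gt0 // [iota _ _]/= map_cons rev_cons.
apply: Diamond_Kseq => // Y; rewrite mem_rev => /mapP[j]; rewrite mem_iota => /andP[ltij _] ->.
by exists j.-1, (kf j); rewrite prednK ?kf_range //; apply: leq_ltn_trans ltij.
Qed.

End Witness.

Theorem lemma7 (h r : nat) (ks : seq nat) :
  1 <= h -> 1 <= r -> size ks = r -> all (fun k => 1 <= k <= h) ks ->
  exists A : seq nat, inW3N A /\ u_is A [seq Kw h k | k <- ks].
Proof.
move=> h_gt0 r_gt0 size_ks ks_range; subst r.
have kf_range j : 1 <= nth 1 ks j <= h.
  have [/(mem_nth 1)/(allP ks_range)//|/(nth_default 1)->] := ltnP j (size ks).
  by rewrite leqnn h_gt0.
exists (witness h (nth 1 ks) (size ks)); split; first exact: inW3N_witness.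
have -> : [seq Kw h k | k <- ks] = [seq word1 [:: Kseq h (nth 1 ks j)] | j <- iota 0 (size ks)].
  by rewrite -{1}(mkseq_nth 1 ks) /mkseq -map_comp; apply: eq_map => j /=; rewrite Kw_Kseq.
exact: u_is_witness.
Qed.
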